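(* Let $p \geq 3$ be a prime and $x, y \in \mathbb{Z}$ with $x^2 - 2 = y^p$ and $y \neq -1$. Then: (1) if $y \not\equiv -1 \pmod p$, then $x \not\equiv \pm 1 \pmod p$; (2) if $y \equiv -1 \pmod p$, then $x \equiv \pm 1 \pmod{p^2}$, and more precisely $v_p((x-1)(x+1)) = v_p(y+1) + 1$.
   Context: $v_p$ denotes the $p$-adic valuation. *)

From mathcomp Require Import all_boot all_order all_algebra.
Set Implicit Arguments. Unset Strict Implicit. Unset Printing Implicit Defensive.
Import Order.TTheory GRing.Theory Num.Theory.
Local Open Scope ring_scope.

(* p-adic valuation of an integer: v_p(z) = logn p |z| (v_p(0) := 0, unused here). *)
Definition vp (p : nat) (z : int) : nat := logn p `|z|%N.

(** Since [(x - 1)(x + 1) = x^2 - 1 = y^p + 1] and, by Fermat,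
    [y^p + 1 = y + 1 (mod p)], the prime [p] divides [x - 1] or [x + 1] only
    when it divides [y + 1]; this is (1).  If [p] divides [y + 1], expanding
    [(-y)^p = (1 - (y + 1))^p] to second order (lifting the exponent for odd
    [p]) gives [y^p + 1 = (y + 1) p (1 + p t)], so
    [v_p((x - 1)(x + 1)) = v_p(y + 1) + 1 >= 2].  The odd prime [p] cannot
    divide both [x - 1] and [x + 1], whose difference is [2], so [p^2]
    divides one of them; this is (2). *)

From mathcomp Require Import all_boot all_order all_algebra.
From mathcomp Require Import ring.
Set Implicit Arguments.
Unset Strict Implicit.
Unset Printing Implicit Defensive.
Import Order.TTheory GRing.Theory Num.Theory.
Local Open Scope ring_scope.

Lemma eqz_modP (d m n : int) : (m = n %[mod d])%Z <-> (d %| m - n)%Z.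
Proof. by rewrite -eqz_mod_dvd; split=> /eqP. Qed.

Lemma fermat_littlez (p : nat) (y : int) : prime p -> (y ^+ p = y %[mod p%:Z])%Z.
Proof.
move=> p_pr; rewrite -modzXm -[RHS]modz_mod.
have [r ->] : exists r : nat, (y %% p%:Z)%Z = r%:Z.
  by exists `|(y %% p%:Z)%Z|%N; rewrite gez0_abs // modz_ge0 // eqz_nat -lt0n prime_gt0.
by rewrite -!natz -natrX !natz !modz_nat fermat_little.
Qed.

Lemma dvdz_expr_prime_add1 (p : nat) (y : int) :
  prime p -> (p%:Z %| y ^+ p + 1)%Z = (p%:Z %| y + 1)%Z.
Proof.
move=> p_pr; have /eqP yp1 : (y ^+ p + 1 == y + 1 %[mod p%:Z])%Z.
  by rewrite eqz_modDr; apply/eqP; exact: fermat_littlez.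
by apply/dvdz_mod0P/dvdz_mod0P; rewrite yp1.
Qed.

Lemma expr1Dn_mod_cube (R : comPzRingType) (a : R) (n : nat) :
  exists c : R, (1 + a) ^+ n = 1 + n%:R * a + 'C(n, 2)%:R * a ^+ 2 + a ^+ 3 * c.
Proof.
elim: n => [|n [c IHn]]; first by exists 0; rewrite expr0 bin0n /=; ring.
exists (c + 'C(n, 2)%:R + a * c).
by rewrite exprS IHn binS bin1 natrD mulrSr; ring.
Qed.

(* Expand [-y = 1 - (y + 1)]: the second-order term [C(n, 2) (y + 1)^2] is
   divisible by [n^3] because [C(n, 2) = n (n - 1)/2] with [n - 1] even. *)
Lemma expr_odd_add1_factor (n : nat) (y : int) :
  odd n -> (n%:Z %| y + 1)%Z ->
  exists t : int, y ^+ n + 1 = (y + 1) * n%:Z * (1 + n%:Z * t).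
Proof.
move=> n_odd /dvdzP [q yq].
have [c expn] := expr1Dn_mod_cube (- (q * n%:Z)) n.
have -> : y = - (1 - q * n%:Z) by rewrite -yq; ring.
exists (- (n.-1./2)%:Z * q + q ^+ 2 * c).
rewrite exprNn -signr_odd n_odd expr1 expn bin2odd // natrM; ring.
Qed.

Lemma vpM (p : nat) (a b : int) :
  a != 0 -> b != 0 -> vp p (a * b) = (vp p a + vp p b)%N.
Proof. by move=> a0 b0; rewrite /vp abszM lognM ?absz_gt0. Qed.

Lemma vp_prime (p : nat) : prime p -> vp p p%:Z = 1%N.
Proof. by move=> p_pr; rewrite /vp absz_nat logn_prime ?eqxx. Qed.

Lemma vp_ndvdz (p : nat) (z : int) : prime p -> ~~ (p%:Z %| z)%Z -> vp p z = 0%N.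
Proof. by move=> p_pr ndvd; apply: logn_coprime; rewrite prime_coprime. Qed.

Lemma pfactor_dvdz (p n : nat) (z : int) :
  prime p -> z != 0 -> ((p ^ n)%:Z %| z)%Z = (n <= vp p z)%N.
Proof. by move=> p_pr z_neq0; rewrite dvdzE absz_nat pfactor_dvdn ?absz_gt0. Qed.

Lemma dvdz_1Dmul (d t : int) : (d %| 1 + d * t)%Z = (`|d|%N == 1%N).
Proof. by rewrite rpredDr ?dvdz_mulr // dvdz1. Qed.

Lemma vp_expr_prime_add1 (p : nat) (y : int) :
  prime p -> odd p -> y + 1 != 0 -> (p%:Z %| y + 1)%Z ->
  vp p (y ^+ p + 1) = (vp p (y + 1)).+1.
Proof.
move=> p_pr p_odd y1_neq0 /(expr_odd_add1_factor p_odd) [t ->].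
have p_neq0 : p%:Z != 0 by rewrite eqz_nat -lt0n prime_gt0.
have ndvd_t : ~~ (p%:Z %| 1 + p%:Z * t)%Z.
  by rewrite dvdz_1Dmul absz_nat neq_ltn prime_gt1 ?orbT.
have t_neq0 : 1 + p%:Z * t != 0 by apply: contraNneq ndvd_t => ->; exact: dvdz0.
by rewrite !vpM ?mulf_neq0 // vp_prime // (vp_ndvdz p_pr ndvd_t) addn0 addn1.
Qed.

Lemma coprimez_pfactor (p k : nat) (z : int) :
  prime p -> ~~ (p%:Z %| z)%Z -> coprimez (p ^ k)%:Z z.
Proof. by move=> p_pr ndvd; rewrite coprimezE absz_nat coprimeXl // prime_coprime. Qed.

Lemma pfactor_dvdz_subr1_addr1 (p k : nat) (x : int) : prime p -> odd p ->
  ((p ^ k)%:Z %| (x - 1) * (x + 1))%Z ->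
  ((p ^ k)%:Z %| x - 1)%Z \/ ((p ^ k)%:Z %| x + 1)%Z.
Proof.
move=> p_pr p_odd dvd_pk.
have [dvd_xD1 | ndvd_xD1] := boolP (p%:Z %| x + 1)%Z; last first.
  by left; rewrite -(Gauss_dvdzl _ (coprimez_pfactor k p_pr ndvd_xD1)).
have ndvd_xB1 : ~~ (p%:Z %| x - 1)%Z.
  apply: contraL p_odd => dvd_xB1.
  have : (p%:Z %| (x + 1) - (x - 1))%Z by rewrite rpredB.
  have -> : (x + 1) - (x - 1) = 2 by ring.
  by rewrite dvdzE absz_nat dvdn_prime2 // => /eqP ->.
by right; rewrite -(Gauss_dvdzr _ (coprimez_pfactor k p_pr ndvd_xB1)).
Qed.

Theorem theorem2p3 (p : nat) (x y : int) :
  prime p -> (3 <= p)%N -> x ^+ 2 - 2 = y ^+ p -> y != -1 ->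
  (~ (y = -1 %[mod p%:Z])%Z ->
     ~ (x = 1 %[mod p%:Z])%Z /\ ~ (x = -1 %[mod p%:Z])%Z) /\
  ((y = -1 %[mod p%:Z])%Z ->
     ((x = 1 %[mod (p ^ 2)%:Z])%Z \/ (x = -1 %[mod (p ^ 2)%:Z])%Z) /\
     vp p ((x - 1) * (x + 1)) = (vp p (y + 1)).+1).
Proof.
move=> p_pr p_ge3 xy yN1.
have p_odd : odd p by case: (even_prime p_pr) p_ge3 => [->|].
have x2B1 : (x - 1) * (x + 1) = y ^+ p + 1 by rewrite -xy; ring.
split=> [yN1_mod | /eqz_modP].
  have ndvd : ~ (p%:Z %| (x - 1) * (x + 1))%Z.
    rewrite x2B1 dvdz_expr_prime_add1 //.
    by apply: contra_not yN1_mod => dvd; apply/eqz_modP; rewrite opprK.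
  split=> /eqz_modP; rewrite ?opprK => dvd; apply: ndvd.
    exact: dvdz_mulr.
  exact: dvdz_mull.
rewrite opprK => dvd_y1.
have y1_neq0 : y + 1 != 0 by rewrite addr_eq0.
have vp_x : vp p ((x - 1) * (x + 1)) = (vp p (y + 1)).+1.
  by rewrite x2B1 vp_expr_prime_add1.
split=> //.
have x_neq0 : (x - 1) * (x + 1) != 0.
  by apply: contra_eqN vp_x => /eqP ->; rewrite /vp logn0.
have : ((p ^ 2)%:Z %| (x - 1) * (x + 1))%Z.
  by rewrite pfactor_dvdz // vp_x ltnS -pfactor_dvdz ?expn1.
by case/pfactor_dvdz_subr1_addr1 => // dvd; [left | right]; apply/eqz_modP; rewrite ?opprK.
Qed.
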